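(* Let $\alpha>0$, $\beta>0$, $K\ge1$, $A\ge1$, $\eta>0$, $s\in(0,1)$ and $\delta\in(0,1)$. Let $(\nu_\omega)_{\omega\in\Omega}$ be a $(\delta,\alpha,K)$-Furstenberg tuple such that $\Omega$ satisfies the Frostman condition \[ |\Omega\cap B_r|\le A\,r^\beta|\Omega|\quad\text{for every ball }B_r\subset\mathbb{R}^2\text{ of radius } r\in[\delta,1]. \] Write $E_\omega=\operatorname{supp}(\nu_\omega)$, $E=\bigcup_{\omega\in\Omega}E_\omega$, and assume $\mathcal{N}_{\delta^s}(E)\le(\delta^s)^{-\alpha-\beta/2-\eta}$. Let $\Lambda$ be a maximal $\delta^s$-separated subset of $\Omega$ and for $\lambda\in\Lambda$ put $\Omega_\lambda=\Omega\cap B^2(\lambda,\delta^s)$. Then there is a set $\Lambda'\subset\Lambda$ such that \[ |\Lambda'|\ \ge\ c\,(\delta^s)^{-\beta} \qquad\text{and}\qquad |\Omega_\lambda|\ \ge\ c\,(\delta^s)^{\beta+2\eta}|\Omega|\ \text{ for all }\lambda\in\Lambda', \] where $c>0$ depends only on $K,\alpha,\beta$ and $A$.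
   Context: $B^d(x,r)$ denotes the open ball of centre $x$ and radius $r$ in $\mathbb{R}^d$, $B^d=B^d(0,1)$, and $B_r$ an arbitrary ball of radius $r$. A probability measure $\mu$ on $B^1=(-1,1)$ is a $(\delta,\alpha,K)$-measure if $\mu(B_r)\le Kr^\alpha$ for every ball $B_r$ of radius $r\in[\delta,1]$. For $\omega=(a,b)\in\mathbb{R}^2$, $L_\omega(t)=at+b$, and $L_\omega$ also denotes the line $\{(t,y):y=at+b\}$. A family $(\nu_\omega)_{\omega\in\Omega}$ is a $(\delta,\alpha,K)$-Furstenberg tuple if $\Omega\subset B^2$ is a $\delta$-separated set and, for each $\omega\in\Omega$, there is a $(\delta,\alpha,K)$-measure $\nu'_\omega$ with $\nu_\omega$ equal to the push-forward of $\nu'_\omega$ under the map $x\mapsto(x,L_\omega(x))$. $\mathcal{N}_r(A)$ denotes the smallest number of balls of radius $r$ needed to cover $A$; $|\cdot|$ denotes cardinality. *)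

From HB Require Import structures.
From mathcomp Require Import all_boot all_order all_algebra.
From mathcomp Require Import finmap.
From mathcomp Require Import all_classical all_reals all_analysis.
Set Implicit Arguments. Unset Strict Implicit. Unset Printing Implicit Defensive.
Import Order.TTheory GRing.Theory Num.Theory.
Local Open Scope classical_set_scope.
Local Open Scope ring_scope.

Section Defs.
Variable R : realType.

Definition dist2 (p q : R * R) : R :=
  Num.sqrt ((p.1 - q.1) ^+ 2 + (p.2 - q.2) ^+ 2).

Definition ball2 (x : R * R) (r : R) : set (R * R) := [set p | dist2 x p < r].

Definition ball1 (x r : R) : set R := [set y | `|y - x| < r].

Definition Lw (w : R * R) (t : R) : R := w.1 * t + w.2.

Definition graphmap (w : R * R) (x : R) : R * R := (x, Lw w x).

(* (delta, alpha, K)-measure: probability measure on B^1 = (-1,1)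
   (modelled as a probability on R giving full mass to (-1,1)) with
   mu(B_r) <= K r^alpha for all balls of radius r in [delta, 1]. *)
Definition dak_measure (delta alpha K : R) (mu : probability R R) : Prop :=
  mu (~` `]-1, 1[%classic) = 0%E /\
  forall (x r : R), delta <= r <= 1 -> (mu (ball1 x r) <= (K * r `^ alpha)%:E)%E.

Definition separated (delta : R) (S : {fset (R * R)}) : Prop :=
  forall p q, p \in S -> q \in S -> p != q -> delta <= dist2 p q.

(* (delta, alpha, K)-Furstenberg tuple (given through the measures nu'_omega;
   nu_omega is the push-forward of nu'_omega under x |-> (x, L_omega x)). *)
Definition furstenberg_tuple (delta alpha K : R) (Omega : {fset (R * R)})
    (nu' : R * R -> probability R R) : Prop :=
  (forall w, w \in Omega -> dist2 w (0, 0) < 1) /\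
  separated delta Omega /\
  (forall w, w \in Omega -> dak_measure delta alpha K (nu' w)).

Definition nu_of (nu' : R * R -> probability R R) (w : R * R) :
    set (R * R) -> \bar R := pushforward (nu' w) (graphmap w).

Definition msupp (nu : set (R * R) -> \bar R) : set (R * R) :=
  [set p | forall r, 0 < r -> (0 < nu (ball2 p r))%E].

Definition covN (A : set (R * R)) (r : R) : \bar R :=
  ereal_inf [set ((size cs)%:R)%:E | cs in
     [set cs : seq (R * R) | A `<=` \bigcup_(c in [set` cs]) ball2 c r]].

Definition maximal_separated (rho : R) (Lambda Omega : {fset (R * R)}) : Prop :=
  (Lambda `<=` Omega)%fset /\ separated rho Lambda /\
  forall L2 : {fset (R * R)}, (Lambda `<=` L2)%fset -> (L2 `<=` Omega)%fset ->
     separated rho L2 -> L2 = Lambda.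

Definition fset_ball (Omega : {fset (R * R)}) (x : R * R) (r : R) : {fset (R * R)} :=
  [fset w in Omega | dist2 x w < r]%fset.

End Defs.

From Pilot Require Import Defs.
From HB Require Import structures.
From mathcomp Require Import all_boot all_order all_algebra.
From mathcomp Require Import finmap.
From mathcomp Require Import all_classical all_reals all_analysis.
From mathcomp Require Import ring lra.
Set Implicit Arguments. Unset Strict Implicit. Unset Printing Implicit Defensive.
Import Order.TTheory GRing.Theory Num.Theory.
Local Open Scope classical_set_scope.
Local Open Scope ring_scope.

(* Let T = rho^(-beta - 2 eta).  The heart of the proof is the bound
   #|Lambda| <= C T for the maximal rho-separated Lambda in Omega.  When rho
   is not small compared with a scale d0 = d0(K, alpha), this is plain
   volume packing in the unit square.  Otherwise cover E by N balls of radius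
   rho with N <= rho^(-alpha - beta/2 - eta).  For each line lambda in Lambda
   the measure nu'_lambda splits into pieces b_lambda(j), one per ball, each
   of mass at most K rho^alpha; by the Frostman bound at scale d0 at least half
   of b_lambda (x) b_lambda sits on pairs of balls at horizontal distance
   >= d0.  Lines meeting two such balls agree up to O(rho / d0), so by
   packing only O(1) lines of Lambda meet both, and double counting gives
   #|Lambda| / 2 <= O(1) N^2 (K rho^alpha)^2 <= O(1) T.  Finally the balls
   Omega_lambda cover Omega and each has at most A rho^beta #|Omega| points,
   so a pigeonhole argument shows that those with at least
   c rho^(beta + 2 eta) #|Omega| points are at least c rho^(-beta) in number. *)

Section PlaneGeometry.
Variable R : realType.
Implicit Types p q : R * R.

Lemma dist2_sym p q : dist2 p q = dist2 q p.
Proof. by rewrite /dist2 -(sqrrN (p.1 - q.1)) -(sqrrN (p.2 - q.2)) !opprB. Qed.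

Lemma dist2_xx p : dist2 p p = 0.
Proof. by rewrite /dist2 !subrr expr0n /= addr0 sqrtr0. Qed.

Lemma dist2_ge_coord1 p q : `|p.1 - q.1| <= dist2 p q.
Proof. by rewrite /dist2 -sqrtr_sqr; apply: ler_wsqrtr; rewrite lerDl sqr_ge0. Qed.

Lemma dist2_ge_coord2 p q : `|p.2 - q.2| <= dist2 p q.
Proof. by rewrite /dist2 -sqrtr_sqr; apply: ler_wsqrtr; rewrite lerDr sqr_ge0. Qed.

Lemma dist2_lt_coords p q r : 0 < r ->
  `|p.1 - q.1| < r / 2 -> `|p.2 - q.2| < r / 2 -> dist2 p q < r.
Proof.
move=> r0 h1 h2; rewrite /dist2 -(ger0_norm (ltW r0)) -sqrtr_sqr ltr_sqrt ?exprn_gt0 //.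
rewrite -(real_normK (num_real (p.1 - q.1))) -(real_normK (num_real (p.2 - q.2))).
have n1 := normr_ge0 (p.1 - q.1); have n2 := normr_ge0 (p.2 - q.2).
nra.
Qed.

Lemma same_cell_close (rho a0 u v : R) : 0 < rho -> a0 <= u -> a0 <= v ->
  Num.truncn ((u - a0) * 2 / rho) = Num.truncn ((v - a0) * 2 / rho) ->
  `|u - v| < rho / 2.
Proof.
move=> r0 hu hv e.
have s0 : 0 < 2 / rho by rewrite divr_gt0.
have [u0 v0] : 0 <= (u - a0) * 2 / rho /\ 0 <= (v - a0) * 2 / rho.
  by split; apply: divr_ge0; lra.
have /andP[lu uu] := truncn_itv u0; have /andP[lv uv] := truncn_itv v0.
rewrite e -natr1 in lu uu; rewrite -natr1 in uv.
have : `|(u - v) * (2 / rho)| < 1.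
  rewrite ltr_norml; apply/andP; split; rewrite mulrBl; lra.
by rewrite normrM (gtr0_norm s0) -ltr_pdivlMr // div1r invf_div.
Qed.

(* Volume packing: a rho-separated set in a square of side L has at most
   (2L/rho + 1)^2 points, since distinct points lie in distinct grid cells. *)
Lemma packing (S : {fset (R * R)}) (rho L a0 b0 : R) :
  0 < rho -> 0 <= L -> Defs.separated rho S ->
  (forall p, p \in S -> a0 <= p.1 <= a0 + L /\ b0 <= p.2 <= b0 + L) ->
  (#|` S|%:R <= (2 * L / rho + 1) ^+ 2 :> R).
Proof.
move=> r0 L0 sep box.
pose m := (Num.truncn (2 * L / rho)).+1.
pose cell p := (Num.truncn ((p.1 - a0) * 2 / rho), Num.truncn ((p.2 - b0) * 2 / rho)).
pose cells := [seq (i, j) | i <- iota 0 m, j <- iota 0 m].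
have cell_inj : {in S &, injective cell}.
  move=> p q pS qS [e1 e2]; apply/eqP; apply: contraT => pq.
  have [/andP[p1 _] /andP[p2 _]] := box p pS; have [/andP[q1 _] /andP[q2 _]] := box q qS.
  suff : dist2 p q < rho by rewrite ltNge sep.
  by apply: dist2_lt_coords; [|exact: same_cell_close e1|exact: same_cell_close e2].
have cell_in p : p \in S -> cell p \in cells.
  move=> pS; have [/andP[p1 p1'] /andP[p2 p2']] := box p pS.
  apply: allpairs_f; rewrite mem_iota add0n /m ltnS; apply: le_truncn;
    rewrite ler_pM2r ?invr_gt0 //; lra.
have hsz : (#|` S| <= m * m)%N.
  have -> : (m * m = size cells)%N by rewrite size_allpairs size_iota.
  rewrite -(size_map cell); apply: uniq_leq_size.
    by rewrite map_inj_in_uniq ?fset_uniq.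
  by move=> x /mapP [p pS ->]; exact: cell_in.
have : (#|` S|%:R <= (m * m)%N%:R :> R) by rewrite ler_nat.
move=> /le_trans; apply; rewrite natrM -expr2 lerXn2r ?nnegrE //.
- by apply: addr_ge0 => //; apply: divr_ge0 => //; lra.
- by rewrite /m -natr1 lerD2r truncn_le; apply: divr_ge0 => //; lra.
Qed.

End PlaneGeometry.

Section Counting.
Local Open Scope fset_scope.
Variable R : realType.

Lemma card_fset_sep (T : choiceType) (X : {fset T}) (P : pred T) :
  #|` [fset x in X | P x]| = count P (enum_fset X).
Proof.
rewrite -size_filter; apply: perm_size; apply: uniq_perm.
- exact: fset_uniq.
- by rewrite filter_uniq // fset_uniq.
move=> x; rewrite mem_filter.
have -> : (x \in enum_fset [fset x0 in X | P x0]) = (x \in [fset x0 in X | P x0]) by [].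
by rewrite !inE andbC.
Qed.

Lemma sum_cond_const (s : seq (R * R)) (P : pred (R * R)) (m : R) :
  \sum_(l <- s | P l) m = (count P s)%:R * m.
Proof. by rewrite -sum1_count natr_sum big_distrl /=; apply: eq_bigr => *; rewrite mul1r. Qed.

Lemma separated_sub (S T : {fset (R * R)}) (r : R) :
  S `<=` T -> Defs.separated r T -> Defs.separated r S.
Proof. by move=> /fsubsetP ST sep p q pS qS; apply: sep; apply: ST. Qed.

Lemma maximal_separated_net (rho : R) (La Om : {fset (R * R)}) : 0 < rho ->
  maximal_separated rho La Om ->
  forall w, w \in Om -> exists2 l, l \in La & dist2 l w < rho.
Proof.
move=> r0 [sub [sep mx]] w wO; apply: contrapT => hn.
have far l : l \in La -> rho <= dist2 l w.
  by move=> lL; rewrite leNgt; apply/negP => h; apply: hn; exists l.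
have wL : w \in La.
  rewrite -(mx (w |` La) (fsubsetU1 _ _)) ?fsetU11 ?fsubUset ?fsub1set ?wO //.
  move=> p q; rewrite !inE => /orP[/eqP-> | pL] /orP[/eqP-> | qL] pq.
  - by rewrite eqxx in pq.
  - by rewrite dist2_sym; exact: far.
  - exact: far.
  - exact: sep.
by have := far w wL; rewrite dist2_xx; lra.
Qed.

Lemma net_cover_card (Om La : {fset (R * R)}) (rho : R) :
  (forall w, w \in Om -> exists2 l, l \in La & dist2 l w < rho) ->
  (#|` Om| <= \sum_(l <- La) #|` fset_ball Om l rho|)%N.
Proof.
move=> cov.
under eq_bigr => l _ do rewrite /fset_ball card_fset_sep -sum1_count big_mkcond.
rewrite exchange_big /= -[X in (X <= _)%N]sum1_size.
rewrite big_seq_cond [X in (_ <= X)%N]big_seq_cond; apply: leq_sum => w /andP[wO _].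
have [l lL dl] := cov w wO.
by rewrite -big_mkcond sum1_count -has_count; apply/hasP; exists l.
Qed.

Lemma rich_balls (Om La : {fset (R * R)}) (rho U theta M : R) :
  (forall w, w \in Om -> exists2 l, l \in La & dist2 l w < rho) ->
  (forall l, l \in La -> #|` fset_ball Om l rho|%:R <= U) ->
  #|` La|%:R <= M -> 0 <= theta -> M * theta <= #|` Om|%:R / 2 ->
  exists La' : {fset (R * R)}, (La' `<=` La) /\
    #|` Om|%:R / 2 <= #|` La'|%:R * U /\
    forall l, l \in La' -> theta <= #|` fset_ball Om l rho|%:R.
Proof.
move=> cov up hM th0 hMt.
pose rich l := theta <= #|` fset_ball Om l rho|%:R.
exists [fset l in La | rich l]; split; [|split].
- by apply/fsubsetP => l; rewrite !inE => /andP[].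
- have total : (#|` Om|%:R <= \sum_(l <- La) (#|` fset_ball Om l rho|%:R : R)).
    by rewrite -natr_sum ler_nat net_cover_card.
  rewrite (bigID rich) /= in total.
  have rich_part : \sum_(l <- La | rich l) (#|` fset_ball Om l rho|%:R : R)
      <= #|` [fset l in La | rich l]|%:R * U.
    rewrite card_fset_sep -sum_cond_const big_seq_cond [X in _ <= X]big_seq_cond.
    by apply: ler_sum => l /andP[lL _]; exact: up.
  have poor_part : \sum_(l <- La | ~~ rich l) (#|` fset_ball Om l rho|%:R : R)
      <= #|` La|%:R * theta.
    apply: (@le_trans _ _ (\sum_(l <- La | ~~ rich l) theta)).
      by apply: ler_sum => l; rewrite /rich -ltNge => /ltW.
    by rewrite sum_cond_const ler_wpM2r // ler_nat count_size.
  have : #|` La|%:R * theta <= M * theta by rewrite ler_wpM2r.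
  lra.
- by move=> l; rewrite !inE => /andP[].
Qed.

End Counting.

Section MassSplitting.
Import numFieldNormedType.Exports.
Variable R : realType.

Local Notation I1 := (`]-1, 1[%classic : set R).

Lemma measurable_ball1 (x r : R) : measurable (ball1 x r).
Proof.
have -> : ball1 x r = [set` `]x - r, x + r[%R].
  apply/seteqP; split => y; rewrite /ball1 /= in_itv /= ltr_distl;
    move=> /andP[h1 h2]; apply/andP; split; lra.
exact: measurable_itv.
Qed.

Lemma graph_dist_continuous (w p : R * R) :
  continuous (fun t : R => dist2 p (graphmap w t)).
Proof.
move=> x; rewrite /dist2 /graphmap /Lw /=.
have line : (fun t : R => w.1 * t + w.2) @ x --> w.1 * x + w.2.
  by apply: cvgD; [apply: cvgM; [exact: cvg_cst | exact: cvg_id] | exact: cvg_cst].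
apply: continuous_comp; last exact: sqrt_continuous.
apply: cvgD; rewrite !expr2; apply: cvgM; apply: cvgB;
  solve [exact: cvg_cst | exact: cvg_id | exact: line].
Qed.

Lemma open_graph_preimage (w p : R * R) (r : R) : open (graphmap w @^-1` ball2 p r).
Proof.
have -> : graphmap w @^-1` ball2 p r =
    (fun t : R => dist2 p (graphmap w t)) @^-1` [set y | y < r] by [].
by apply: open_comp; [move=> x _; exact: graph_dist_continuous | exact: open_lt].
Qed.

Variables (mu : probability R R) (w : R * R) (rho : R) (cs : seq (R * R)).
Hypothesis mu_I1 : mu (~` I1) = 0%E.
Hypothesis supp_cover :
  msupp (pushforward mu (graphmap w)) `<=` \bigcup_(c in [set` cs]) ball2 c rho.

Definition tube (i : nat) : set R :=
  I1 `&` (graphmap w @^-1` ball2 (nth 0 cs i) rho).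

Definition piece := seqDU tube.

Definition mass i := fine (mu (piece i)).

Lemma measurable_tube i : measurable (tube i).
Proof.
apply: measurableI; first exact: measurable_itv.
exact: measurable_realfun.open_measurable (@open_graph_preimage _ _ _).
Qed.

Lemma measurable_piece i : measurable (piece i).
Proof.
apply: measurableD; first exact: measurable_tube.
by apply: bigsetU_measurable => k _; exact: measurable_tube.
Qed.

Lemma trivIset_piece (n : nat) (P : {pred 'I_n}) :
  trivIset (fun x => P x) (fun i : 'I_n => piece i).
Proof. by move=> i j _ _ h; apply: val_inj; exact: (trivIset_seqDU tube) _ _ I I h. Qed.

Let tubes := \big[setU/set0]_(k < size cs) tube k.

Lemma measurable_tubes : measurable tubes.
Proof. by apply: bigsetU_measurable => k _; exact: measurable_tube. Qed.

Lemma off_support_null (x : R) :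
  ~ msupp (pushforward mu (graphmap w)) (graphmap w x) ->
  exists2 r : R, 0 < r & mu (graphmap w @^-1` ball2 (graphmap w x) r) = 0%E.
Proof.
move=> nsupp; apply: contrapT => hn; apply: nsupp => r r0.
rewrite ltNge; apply/negP => hle; apply: hn; exists r => //.
by apply/eqP; rewrite -measure_le0.
Qed.

(* The parameters in (-1,1) missed by all tubes form a mu-null set: by
   compactness of [-1,1] they are covered by finitely many null open sets. *)
Lemma uncovered_null : mu (I1 `\` tubes) = 0%E.
Proof.
set F := `[-1, 1]%classic `&` ~` (graphmap w @^-1` \bigcup_(c in [set` cs]) ball2 c rho).
have ZF : I1 `\` tubes `<=` F.
  move=> x [xI nV]; split.
    by move: xI; rewrite /= !in_itv /= => /andP[h1 h2]; rewrite !ltW.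
  move=> [c cin gc]; apply: nV; rewrite /tubes -bigcup_mkord.
  exists (index c cs); first by rewrite /= index_mem.
  by split => //; rewrite /= nth_index.
have cF : compact F.
  apply: compact_closedI; first exact: segment_compact.
  apply: open_closedC; rewrite preimage_bigcup.
  by apply: bigcup_open => c _; exact: open_graph_preimage.
have hx x : exists r : R, F x -> 0 < r /\
    mu (graphmap w @^-1` ball2 (graphmap w x) r) = 0%E.
  have [Fx|nFx] := pselect (F x); last by exists 1.
  have [|r r0 null] := @off_support_null x; last by exists r.
  by move=> /supp_cover; case: Fx.
have [rad hrad] := choice hx.
have ccF : cover_compact F by rewrite -compact_cover.
have := ccF R F
   (fun x => graphmap w @^-1` ball2 (graphmap w x) (rad x)).
case.
- by move=> x _; exact: open_graph_preimage.
- move=> x Fx; exists x => //=.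
  by rewrite /ball2 /= dist2_xx; have [] := hrad x Fx.
move=> D' D'F Fcov.
apply/eqP; rewrite -measure_le0.
have mZ : measurable (I1 `\` tubes).
  by apply: measurableD; [exact: measurable_itv | exact: measurable_tubes].
apply: le_trans (content_sub_fsum _ _ _ mZ (subset_trans ZF Fcov)) _.
- exact: finite_fset.
- move=> x _; exact: measurable_realfun.open_measurable (@open_graph_preimage _ _ _).
rewrite fsbig1 // => x /D'F /set_mem Fx.
by have [] := hrad x Fx.
Qed.

Lemma mass_piece i : mu (piece i) = (mass i)%:E.
Proof.
rewrite /mass fineK // ge0_fin_numE //.
exact: le_lt_trans (probability_le1 _ (measurable_piece i)) (ltry _).
Qed.

Lemma mass_ge0 i : 0 <= mass i.
Proof. exact: fine_ge0. Qed.

(* The pieces exhaust mu up to null sets, so the masses sum to 1. *)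
Lemma mass_sum : \sum_(i < size cs) mass i = 1.
Proof.
suff : (\sum_(i < size cs) mu (piece i) = 1)%E.
  by under eq_bigr do rewrite mass_piece; rewrite sumEFin => -[].
rewrite -(measure_bigsetU_ord_cond mu (P := xpredT) (F := fun i : 'I_(size cs) => piece i)).
2: by move=> i _; exact: measurable_piece.
2: exact: trivIset_piece.
rewrite -bigsetU_seqDU -/tubes.
apply/eqP; rewrite eq_le; apply/andP; split.
  exact: probability_le1 measurable_tubes.
have mZ : measurable (I1 `\` tubes).
  by apply: measurableD; [exact: measurable_itv | exact: measurable_tubes].
have mI : measurable (~` I1) by apply: measurableC; exact: measurable_itv.
rewrite -(probability_setT mu).
have -> : [set: R] = tubes `|` ((~` I1) `|` (I1 `\` tubes)).
  apply/seteqP; split => x // _.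
  have [Vx|nVx] := pselect (tubes x); first by left.
  by have [Ix|nIx] := pselect (I1 x); [right; right | right; left].
apply: le_trans (@measureU2 _ _ _ mu _ _ measurable_tubes (measurableU _ _ mI mZ)) _.
have hZ : (mu (I1 `\` tubes) <= 0)%E by rewrite uncovered_null.
have hI : (mu (~` I1) <= 0)%E by rewrite mu_I1.
apply: le_trans (leeD (lexx _) (le_trans (@measureU2 _ _ _ mu _ _ mI mZ) (leeD hI hZ))) _.
by rewrite !adde0.
Qed.

Lemma piece_sub_ball1 i : piece i `<=` ball1 (nth 0 cs i).1 rho.
Proof.
move=> x [[_ hx] _]; rewrite /ball1 /= distrC.
exact: le_lt_trans (dist2_ge_coord1 (nth 0 cs i) (graphmap w x)) hx.
Qed.

Lemma mass_pos_meets i : 0 < mass i ->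
  exists x, -1 < x < 1 /\ dist2 (nth 0 cs i) (graphmap w x) < rho.
Proof.
rewrite -lte_fin -mass_piece => hp.
have [x [[hI hB] _]] : piece i !=set0.
  by apply/set0P; apply: contraTneq hp => ->; rewrite measure0 ltxx.
by exists x.
Qed.

Variables (delta alpha K : R).
Hypothesis mu_frostman : forall (x r : R), delta <= r <= 1 ->
  (mu (ball1 x r) <= (K * r `^ alpha)%:E)%E.

Lemma mass_near (j : nat) (d : R) : delta <= d + rho <= 1 ->
  \sum_(i < size cs | `|(nth 0 cs i).1 - (nth 0 cs j).1| < d) mass i
     <= K * (d + rho) `^ alpha.
Proof.
move=> hd; rewrite -lee_fin -sumEFin.
under eq_bigr do rewrite -mass_piece.
rewrite -(measure_bigsetU_ord_cond mu
  (P := fun i : 'I_(size cs) => (`|(nth 0 cs i).1 - (nth 0 cs j).1| < d)%R)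
  (F := fun i : 'I_(size cs) => piece i)).
2: by move=> i _; exact: measurable_piece.
2: exact: trivIset_piece.
apply: le_trans (@mu_frostman _ _ hd).
apply: le_measure; rewrite ?inE; [ | exact: measurable_ball1 | ].
- by apply: bigsetU_measurable => i _; exact: measurable_piece.
- apply: (big_ind (fun X => X `<=` ball1 (nth 0 cs j).1 (d + rho))) => //.
  + by move=> X Y hX hY z [/hX|/hY].
  + move=> i hi z /piece_sub_ball1; rewrite /ball1 /= => hz.
    have := ler_distD (nth 0 cs i).1 z (nth 0 cs j).1; lra.
Qed.

Lemma mass_le i : delta <= rho <= 1 -> mass i <= K * rho `^ alpha.
Proof.
move=> hr; rewrite -lee_fin -mass_piece.
apply: le_trans (@mu_frostman _ _ hr).
apply: le_measure; rewrite ?inE; [exact: measurable_piece | exact: measurable_ball1 |].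
exact: piece_sub_ball1.
Qed.

End MassSplitting.

Section TwoBallLines.
Local Open Scope fset_scope.
Local Open Scope ring_scope.
Variable R : realType.

Lemma far_pairs_mass (N : nat) (b : 'I_N -> R) (close : 'I_N -> 'I_N -> bool) :
  (forall i, 0 <= b i) -> \sum_i b i = 1 ->
  (forall j, \sum_(i | close j i) b i <= 1 / 2) ->
  1 / 2 <= \sum_j \sum_(k | ~~ close j k) b j * b k.
Proof.
move=> b0 bs bn.
have row j : b j / 2 <= \sum_(k | ~~ close j k) b j * b k.
  rewrite -big_distrr /=.
  have -> : \sum_(k | ~~ close j k) b k = 1 - \sum_(k | close j k) b k.
    by rewrite -bs [X in _ = X - _](bigID (close j)) /= addrAC subrr add0r.
  by have := bn j; have := b0 j; nra.
by apply: le_trans (ler_sum _ (fun j _ => row j)); rewrite -mulr_suml bs.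
Qed.

Lemma lines_near_common_ball (l l' c : R * R) (x x' rho : R) : `|l'.1| <= 1 ->
  dist2 c (graphmap l x) < rho -> dist2 c (graphmap l' x') < rho ->
  `|(l.1 - l'.1) * x + (l.2 - l'.2)| < 4 * rho.
Proof.
move=> hl' h h'.
have g1 := le_lt_trans (dist2_ge_coord1 _ _) h; have g2 := le_lt_trans (dist2_ge_coord2 _ _) h.
have g1' := le_lt_trans (dist2_ge_coord1 _ _) h'.
have g2' := le_lt_trans (dist2_ge_coord2 _ _) h'.
move: g1 g2 g1' g2'; rewrite /graphmap /Lw /= => g1 g2 g1' g2'.
have exx : `|x - x'| < 2 * rho.
  by have := ler_distD c.1 x x'; rewrite (distrC x c.1); lra.
have slope : `|l'.1 * (x - x')| <= 2 * rho.
  by rewrite normrM; have := normr_ge0 (x - x'); nra.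
have -> : (l.1 - l'.1) * x + (l.2 - l'.2) = (l.1 * x + l.2 - c.2)
    + (c.2 - (l'.1 * x' + l'.2)) - l'.1 * (x - x') by ring.
apply: le_lt_trans (ler_normB _ _) _.
apply: (@le_lt_trans _ _ (`|l.1 * x + l.2 - c.2| + `|c.2 - (l'.1 * x' + l'.2)| + 2 * rho)).
  by apply: lerD => //; exact: ler_normD.
by rewrite distrC in g2; lra.
Qed.

Lemma two_ball_lines_close (rho d0 : R) (cj ck l l' : R * R) (x y x' y' : R) :
  0 < rho -> 4 * rho <= d0 -> d0 <= `|cj.1 - ck.1| ->
  `|l'.1| < 1 -> -1 < x < 1 ->
  dist2 cj (graphmap l x) < rho -> dist2 ck (graphmap l y) < rho ->
  dist2 cj (graphmap l' x') < rho -> dist2 ck (graphmap l' y') < rho ->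
  `|l.1 - l'.1| <= 16 * rho / d0 /\ `|l.2 - l'.2| <= 4 * rho + 16 * rho / d0.
Proof.
move=> r0 rd dd hl' hx hjx hky hjx' hky'.
have d0p : 0 < d0 by lra.
have Dx := lines_near_common_ball (ltW hl') hjx hjx'.
have Dy := lines_near_common_ball (ltW hl') hky hky'.
set A := l.1 - l'.1 in Dx Dy *; set B := l.2 - l'.2 in Dx Dy *.
have xy : d0 / 2 <= `|x - y|.
  have gx := le_lt_trans (dist2_ge_coord1 _ _) hjx.
  have gy := le_lt_trans (dist2_ge_coord1 _ _) hky.
  move: gx gy; rewrite /graphmap /= => gx gy.
  have := ler_distD x cj.1 ck.1; have := ler_distD y x ck.1.
  by rewrite (distrC y ck.1); lra.
have Dxy : `|A| * `|x - y| < 8 * rho.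
  rewrite -normrM.
  have -> : A * (x - y) = (A * x + B) - (A * y + B) by ring.
  by apply: le_lt_trans (ler_normB _ _) _; lra.
have hA : `|A| <= 16 * rho / d0.
  by rewrite ler_pdivlMr //; have := normr_ge0 A; nra.
split => //.
have -> : B = (A * x + B) - A * x by ring.
apply: le_trans (ler_normB _ _) _.
have hxx : `|x| <= 1 by rewrite ler_norml; lra.
by rewrite normrM; have := normr_ge0 A; have := normr_ge0 x; nra.
Qed.

(* Hence a rho-separated family of lines of slope < 1, each meeting both
   balls, is packed in a parameter square of side O(rho / d0) and has at most
   (17 + 64 / d0)^2 elements, a bound independent of rho. *)
Lemma two_ball_lines_card (S : {fset (R * R)}) (rho d0 : R) (cj ck : R * R) :
  0 < rho -> 4 * rho <= d0 -> d0 <= `|cj.1 - ck.1| -> Defs.separated rho S ->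
  (forall l, l \in S -> `|l.1| < 1) ->
  (forall l, l \in S -> (exists x, -1 < x < 1 /\ dist2 cj (graphmap l x) < rho) /\
                         (exists y, -1 < y < 1 /\ dist2 ck (graphmap l y) < rho)) ->
  #|` S|%:R <= (17 + 64 / d0) ^+ 2 :> R.
Proof.
move=> r0 rd dd sep hl hS.
have d0p : 0 < d0 by lra.
have [-> | [l0 l0S]] := fset_0Vmem S; first by rewrite cardfs0 sqr_ge0.
pose W := 4 * rho + 16 * rho / d0.
have W0 : 0 <= W by rewrite /W; apply: addr_ge0; [lra | apply: divr_ge0; lra].
have hW : 16 * rho / d0 <= W by rewrite /W; lra.
have -> : 17 + 64 / d0 = 2 * (2 * W) / rho + 1 by rewrite /W; field; rewrite !gt_eqF.
apply: (packing (a0 := l0.1 - W) (b0 := l0.2 - W) (L := 2 * W) r0 _ sep); first lra.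
move=> l lS.
have [[x [hx1 hx2]] [y [hy1 hy2]]] := hS l lS.
have [[x' [hx1' hx2']] [y' [hy1' hy2']]] := hS l0 l0S.
have [] := two_ball_lines_close r0 rd dd (hl l0 l0S) hx1 hx2 hy2 hx2' hy2'.
rewrite !ler_norml => /andP[a1 a1'] /andP[a2 a2'].
by split; apply/andP; split; rewrite /W in a2 a2' *; lra.
Qed.

End TwoBallLines.

Section Incidences.
Local Open Scope fset_scope.
Local Open Scope ring_scope.
Variable R : realType.

(* A family La of rho-separated lines of slope < 1, each carrying a
   (delta, alpha, K)-measure whose image on the line is covered by the
   rho-balls centred at cs; d0 is a horizontal scale so small that the
   Frostman bound gives mass at most 1/2 to every interval of length 4 d0. *)
Variables (nu' : R * R -> probability R R) (La : {fset (R * R)}) (cs : seq (R * R)).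
Variables (delta alpha K rho d0 : R).
Hypotheses (rho_gt0 : 0 < rho) (rho_range : delta <= rho <= 1).
Hypotheses (rho_small : 4 * rho <= d0) (d0_le : 2 * d0 <= 1).
Hypotheses (alpha_ge0 : 0 <= alpha) (K_ge0 : 0 <= K).
Hypothesis frostman_d0 : K * (2 * d0) `^ alpha <= 1 / 2.
Hypothesis lines_slope : forall l, l \in La -> `|l.1| < 1.
Hypothesis lines_sep : Defs.separated rho La.
Hypothesis lines_measure : forall l, l \in La -> dak_measure delta alpha K (nu' l).
Hypothesis lines_cover : forall l, l \in La ->
  (msupp (nu_of nu' l) `<=` \bigcup_(c in [set` cs]) ball2 c rho)%classic.

Local Notation N := (size cs).
Local Notation B l i := (mass (nu' l) l rho cs i).

Definition close_centres (j k : 'I_N) := `|(nth 0 cs k).1 - (nth 0 cs j).1| < d0.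

Lemma line_far_mass l : l \in La ->
  1 / 2 <= \sum_j \sum_(k | ~~ close_centres j k) B l j * B l k.
Proof.
move=> lL; have [mu_I1 mu_frostman] := lines_measure lL.
apply: far_pairs_mass => [i|| j]; first exact: mass_ge0.
  exact: mass_sum mu_I1 (lines_cover lL).
have hd : delta <= d0 + rho <= 1.
  have /andP[dr r1] := rho_range.
  by have := rho_gt0; have := rho_small; have := d0_le; rewrite andbC; lra.
apply: le_trans (mass_near l cs mu_frostman j hd) _.
apply: le_trans frostman_d0; apply: ler_wpM2l => //.
by apply: ge0_ler_powR => //; rewrite ?nnegrE; have := rho_gt0; have := rho_small; lra.
Qed.

(* A far pair of balls is charged by few lines, each with mass at most
   (K rho^alpha)^2, since the lines meeting both balls are packed. *)
Lemma far_pair_incidences (j k : 'I_N) : ~~ close_centres j k ->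
  \sum_(l <- La) B l j * B l k <= (17 + 64 / d0) ^+ 2 * (K * rho `^ alpha) ^+ 2.
Proof.
move=> far; pose both l := (0 < B l j) && (0 < B l k).
have mass_le' l i : l \in La -> B l i <= K * rho `^ alpha.
  by move=> lL; have [_ fr] := lines_measure lL; exact: (mass_le l cs fr i rho_range).
apply: (@le_trans _ _ (\sum_(l <- La | both l) (K * rho `^ alpha) ^+ 2)).
  rewrite [X in _ <= X]big_mkcond /= big_seq_cond [X in _ <= X]big_seq_cond.
  apply: ler_sum => l /andP[lL _]; rewrite /both; case: ifP.
    by move=> _; rewrite expr2; apply: ler_pM; rewrite ?mass_ge0 ?mass_le'.
  move=> /negbT; rewrite negb_and -!leNgt => /orP[h | h].
    have -> : B l j = 0 by apply/eqP; rewrite eq_le h mass_ge0.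
    by rewrite mul0r.
  have -> : B l k = 0 by apply/eqP; rewrite eq_le h mass_ge0.
  by rewrite mulr0.
rewrite sum_cond_const -card_fset_sep; apply: ler_wpM2r; first exact: sqr_ge0.
apply: (two_ball_lines_card (cj := nth 0 cs j) (ck := nth 0 cs k) rho_gt0 rho_small).
- by rewrite distrC leNgt.
- by apply: separated_sub lines_sep; apply/fsubsetP => l; rewrite !inE => /andP[].
- by move=> l; rewrite !inE => /andP[lL _]; exact: lines_slope.
- move=> l; rewrite !inE => /andP[lL /andP[p1 p2]].
  by split; [exact: mass_pos_meets p1 | exact: mass_pos_meets p2].
Qed.

(* Double counting over (line, far pair) incidences. *)
Lemma incidence_count :
  #|` La|%:R / 2 <= N%:R ^+ 2 * ((17 + 64 / d0) ^+ 2 * (K * rho `^ alpha) ^+ 2).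
Proof.
set C := (17 + 64 / d0) ^+ 2 * (K * rho `^ alpha) ^+ 2.
have C0 : 0 <= C by apply: mulr_ge0; exact: sqr_ge0.
apply: (@le_trans _ _
  (\sum_(l <- La) \sum_j \sum_(k | ~~ close_centres j k) B l j * B l k)).
  rewrite -[#|` La|]sum1_size natr_sum mulr_suml big_seq_cond [X in _ <= X]big_seq_cond.
  by apply: ler_sum => l /andP[lL _]; move: (line_far_mass lL); rewrite mul1r.
rewrite exchange_big /=; under eq_bigr => j _ do rewrite exchange_big /=.
have pair_bound j :
    \sum_(k | ~~ close_centres j k) \sum_(l <- La) B l j * B l k <= \sum_(k < N) C.
  rewrite [X in _ <= X](bigID (fun k => ~~ close_centres j k)) /= -[X in X <= _]addr0.
  apply: lerD; first by apply: ler_sum => k far; exact: far_pair_incidences.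
  by apply: sumr_ge0.
apply: le_trans (ler_sum _ (fun j _ => pair_bound j)) _.
by rewrite !sumr_const card_ord expr2 -natrM mulr_natl mulrnA.
Qed.

End Incidences.

Section NetCardinality.
Local Open Scope fset_scope.
Local Open Scope ring_scope.
Variable R : realType.

Lemma cover_of_covN (E : set (R * R)) (r X : R) : 0 <= X ->
  (covN E r <= X%:E)%E ->
  exists cs : seq (R * R),
    (E `<=` \bigcup_(c in [set` cs]) ball2 c r)%classic /\ (size cs)%:R <= X.
Proof.
move=> X0 hc; apply: contrapT => hn.
have big_covers cs : (E `<=` \bigcup_(c in [set` cs]) ball2 c r)%classic ->
    X < (size cs)%:R.
  by move=> hcs; rewrite ltNge; apply/negP => hle; apply: hn; exists cs.
have /andP[t1 t2] := truncn_itv X0.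
have : ((Num.truncn X).+1%:R%:E <= covN E r)%E.
  apply/ereal_infP => y [cs hcs <-]; rewrite lee_fin ler_nat.
  by rewrite -(ltr_nat R); apply: le_lt_trans t1 (big_covers cs hcs).
by move=> h; have := le_trans h hc; rewrite lee_fin; lra.
Qed.

Lemma powRD_pos (x a b : R) : 0 < x -> x `^ (a + b) = x `^ a * x `^ b.
Proof. by move=> x0; rewrite powRD //; apply/implyP => _; rewrite gt_eqF. Qed.

Lemma powR_le1 (a e : R) : 0 < a <= 1 -> 0 <= e -> a `^ e <= 1.
Proof. by move=> ha he; have := ger_powR ha he; rewrite powRr0. Qed.

(* The horizontal scale d0 at which the Frostman bound for a
   (delta, alpha, K)-measure gives mass at most 1/2 to intervals of length 4 d0. *)
Lemma frostman_scale (alpha K : R) : 0 < alpha -> 1 <= K ->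
  exists2 d0 : R, 0 < d0 & 2 * d0 <= 1 /\ K * (2 * d0) `^ alpha <= 1 / 2.
Proof.
move=> a0 K1; set u := (2 * K)^-1.
have u0 : 0 < u by rewrite invr_gt0; lra.
have u1 : u <= 1 by rewrite invf_le1; lra.
exists (u `^ alpha^-1 / 2); first by rewrite divr_gt0 // powR_gt0.
rewrite mulrC divfK ?pnatr_eq0 //; split.
  by apply: powR_le1; [apply/andP | rewrite invr_ge0 ltW].
rewrite -powRrM mulVf ?gt_eqF // (powRr1 (ltW u0)) /u.
by rewrite invfM mulrCA divff ?mulr1 ?div1r //; lra.
Qed.

Definition net_constant (K d0 : R) : R :=
  2 * ((17 + 64 / d0) ^+ 2 * K ^+ 2) + (16 / d0 + 1) ^+ 2.

Lemma net_constant_ge0 (K d0 : R) : 0 <= net_constant K d0.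
Proof. by apply: addr_ge0; [apply: mulr_ge0 => //; apply: mulr_ge0|]; exact: sqr_ge0. Qed.

(* Small scales: by the incidence count and the covering hypothesis,
   #|La| <= 2 N^2 (17 + 64/d0)^2 (K rho^alpha)^2 with N <= rho^(-alpha-beta/2-eta). *)
Lemma net_card_small_scale (alpha beta eta K delta rho d0 : R)
    (Om La : {fset (R * R)}) (nu' : R * R -> probability R R) :
  0 < alpha -> 1 <= K -> 0 < rho -> delta <= rho <= 1 ->
  4 * rho <= d0 -> 2 * d0 <= 1 -> K * (2 * d0) `^ alpha <= 1 / 2 ->
  furstenberg_tuple delta alpha K Om nu' ->
  (covN (\bigcup_(w in [set` Om]) msupp (nu_of nu' w)) rho
     <= (rho `^ (- alpha - beta / 2 - eta))%:E)%E ->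
  maximal_separated rho La Om ->
  #|` La|%:R <= 2 * ((17 + 64 / d0) ^+ 2 * K ^+ 2) * rho `^ (- beta - 2 * eta).
Proof.
move=> a0 K1 r0 hr rd d1 Kd [Om_ball [_ Om_dak]] Hcov [sub [sep _]].
have [cs [hcs hN]] := cover_of_covN (powR_ge0 _ _) Hcov.
have inOm l : l \in La -> l \in Om by move/(fsubsetP sub).
have slope l : l \in La -> `|l.1| < 1.
  move=> lL; have := Om_ball l (inOm l lL); have := dist2_ge_coord1 l (0, 0).
  by rewrite /= subr0; lra.
have := incidence_count r0 hr rd d1 (ltW a0) (le_trans ler01 K1) Kd slope sep
  (fun l lL => Om_dak l (inOm l lL))
  (fun l lL p hp => hcs p (ex_intro2 _ _ l (inOm l lL) hp)).
set N := (size cs)%:R in hN *; set Q := (17 + 64 / d0) ^+ 2 * K ^+ 2.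
have Q0 : 0 <= Q by rewrite mulr_ge0 ?sqr_ge0.
have Nra0 : 0 <= N * rho `^ alpha by rewrite mulr_ge0 ?ler0n ?powR_ge0.
have Nra : N * rho `^ alpha <= rho `^ (- beta / 2 - eta).
  have -> : - beta / 2 - eta = (- alpha - beta / 2 - eta) + alpha by ring.
  by rewrite powRD_pos // ler_wpM2r ?powR_ge0.
have Nra2 : (N * rho `^ alpha) ^+ 2 <= rho `^ (- beta - 2 * eta).
  have -> : - beta - 2 * eta = (- beta / 2 - eta) + (- beta / 2 - eta) by field.
  by rewrite powRD_pos // expr2 ler_pM.
have -> : N ^+ 2 * ((17 + 64 / d0) ^+ 2 * (K * rho `^ alpha) ^+ 2) =
    Q * (N * rho `^ alpha) ^+ 2 by rewrite /Q; ring.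
by have := ler_wpM2l Q0 Nra2; lra.
Qed.

(* Large scales: Lambda is rho-separated in the unit disc, so packing bounds
   its size by a constant. *)
Lemma net_card_large_scale (rho d0 : R) (La : {fset (R * R)}) :
  0 < d0 -> d0 < 4 * rho -> Defs.separated rho La ->
  (forall w, w \in La -> dist2 w (0, 0) < 1) ->
  #|` La|%:R <= (16 / d0 + 1) ^+ 2.
Proof.
move=> d0p rd sep inB.
have r0 : 0 < rho by lra.
have box p : p \in La -> -1 <= p.1 <= -1 + 2 /\ -1 <= p.2 <= -1 + 2.
  move=> pL; have := inB p pL.
  have := dist2_ge_coord1 p (0, 0); have := dist2_ge_coord2 p (0, 0).
  rewrite /= !subr0 => g2 g1 h.
  have := le_lt_trans g1 h; have := le_lt_trans g2 h.
  by rewrite !ltr_norml => /andP[? ?] /andP[? ?]; split; apply/andP; split; lra.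
apply: le_trans (packing r0 (ler0n _ 2) sep box) _.
have q0 : 0 <= 2 * 2 / rho + 1 by apply: addr_ge0 => //; apply: divr_ge0; lra.
have q0' : 0 <= 16 / d0 + 1 by apply: addr_ge0 => //; apply: divr_ge0; lra.
rewrite lerXn2r ?nnegrE //.
by rewrite lerD2r ler_pdivrMr // mulrAC ler_pdivlMr //; lra.
Qed.

Lemma net_card_bound (alpha beta eta K delta rho d0 : R)
    (Om La : {fset (R * R)}) (nu' : R * R -> probability R R) :
  0 < alpha -> 0 < beta -> 0 < eta -> 1 <= K -> 0 < rho -> delta <= rho <= 1 ->
  0 < d0 -> 2 * d0 <= 1 -> K * (2 * d0) `^ alpha <= 1 / 2 ->
  furstenberg_tuple delta alpha K Om nu' ->
  (covN (\bigcup_(w in [set` Om]) msupp (nu_of nu' w)) rho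
     <= (rho `^ (- alpha - beta / 2 - eta))%:E)%E ->
  maximal_separated rho La Om ->
  #|` La|%:R <= net_constant K d0 * rho `^ (- beta - 2 * eta).
Proof.
move=> a0 b0 e0 K1 r0 hr d0p d1 Kd Hf Hcov Hmax.
have /andP[_ r1] := hr.
have T1 : 1 <= rho `^ (- beta - 2 * eta).
  by rewrite -[X in X <= _](powRr0 rho); apply: ger_powR; [rewrite r0 | lra].
have C2 : 0 <= (16 / d0 + 1) ^+ 2 := sqr_ge0 _.
rewrite /net_constant mulrDl.
have [small | large] := leP (4 * rho) d0.
  have := net_card_small_scale a0 K1 r0 hr small d1 Kd Hf Hcov Hmax.
  have : 0 <= (16 / d0 + 1) ^+ 2 * rho `^ (- beta - 2 * eta).
    by rewrite mulr_ge0 ?powR_ge0 ?sqr_ge0.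
  lra.
have [Om_ball _] := Hf; have [sub [sep _]] := Hmax.
have := net_card_large_scale d0p large sep (fun w wL => Om_ball w (fsubsetP sub w wL)).
have : 0 <= 2 * ((17 + 64 / d0) ^+ 2 * K ^+ 2) * rho `^ (- beta - 2 * eta).
  by rewrite mulr_ge0 ?powR_ge0 // mulr_ge0 // mulr_ge0 ?sqr_ge0.
have := ler_wpM2l C2 T1; rewrite mulr1; lra.
Qed.

End NetCardinality.

Section Selection.
Local Open Scope fset_scope.
Local Open Scope ring_scope.
Variable R : realType.

(* Given a rho-net La of Om with #|La| <= C rho^(-beta-2eta) and the
   Frostman upper bound on the balls, the pigeonhole lemma with threshold
   c rho^(beta+2eta) #|Om|, c = 1 / (2 (C + A)), selects the rich balls. *)
Lemma rich_net_selection (A C beta eta rho : R) (Om La : {fset (R * R)}) :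
  0 < rho -> 1 <= A -> 0 <= C -> Om != fset0 ->
  (forall w, w \in Om -> exists2 l, l \in La & dist2 l w < rho) ->
  (forall l, l \in La -> #|` fset_ball Om l rho|%:R <= A * rho `^ beta * #|` Om|%:R) ->
  #|` La|%:R <= C * rho `^ (- beta - 2 * eta) ->
  exists La' : {fset (R * R)}, (La' `<=` La) /\
    (2 * (C + A))^-1 * rho `^ (- beta) <= #|` La'|%:R /\
    forall l, l \in La' ->
      (2 * (C + A))^-1 * rho `^ (beta + 2 * eta) * #|` Om|%:R
        <= #|` fset_ball Om l rho|%:R.
Proof.
move=> r0 A1 C0 Om0 net frost cardLa.
set c := (2 * (C + A))^-1.
have c0 : 0 < c by rewrite invr_gt0; lra.
have cCA : c * (2 * (C + A)) = 1 by rewrite mulVf // gt_eqF //; lra.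
have Om_gt0 : 0 < #|` Om|%:R :> R by rewrite ltr0n cardfs_gt0.
have inv_exp : rho `^ (- beta - 2 * eta) * rho `^ (beta + 2 * eta) = 1.
  by rewrite -powRD_pos // (_ : _ + _ = 0) ?powRr0 //; ring.
have theta0 : 0 <= c * rho `^ (beta + 2 * eta) * #|` Om|%:R.
  by rewrite !mulr_ge0 ?powR_ge0 ?ltW.
have few : C * rho `^ (- beta - 2 * eta) * (c * rho `^ (beta + 2 * eta) * #|` Om|%:R)
    <= #|` Om|%:R / 2.
  have -> : C * rho `^ (- beta - 2 * eta) * (c * rho `^ (beta + 2 * eta) * #|` Om|%:R)
      = c * C * (rho `^ (- beta - 2 * eta) * rho `^ (beta + 2 * eta)) * #|` Om|%:R by ring.
  rewrite inv_exp mulr1; have : c * C <= 1 / 2 by nra.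
  by nra.
have [La' [sub [half rich]]] := rich_balls net frost cardLa theta0 few.
exists La'; do 2?split => //.
have rb0 : 0 < rho `^ beta by exact: powR_gt0.
rewrite powRN -/(c / rho `^ beta) ler_pdivrMr //.
set n := #|` La'|%:R in half *.
have n0 : 0 <= n by exact: ler0n.
have : 1 / 2 <= A * (n * rho `^ beta).
  rewrite -(ler_pM2r Om_gt0); move: half.
  by rewrite (_ : n * _ = A * (n * rho `^ beta) * #|` Om|%:R); [lra | ring].
by nra.
Qed.

End Selection.

Lemma power_scale (R : realType) (s delta : R) : 0 < s < 1 -> 0 < delta < 1 ->
  0 < delta `^ s /\ delta <= delta `^ s <= 1.
Proof.
move=> /andP[s0 s1] /andP[de0 de1]; split; first exact: powR_gt0.
have hd : 0 < delta <= 1 by rewrite de0 ltW.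
by rewrite ger1_powR ?powR_le1 // ltW.
Qed.

Theorem lemma9 (R : realType) (alpha beta K A : R) :
  0 < alpha -> 0 < beta -> 1 <= K -> 1 <= A ->
  exists c : R, 0 < c /\
  forall (eta s delta : R) (Omega : {fset (R * R)})
         (nu' : R * R -> probability R R) (Lambda : {fset (R * R)}),
    0 < eta -> 0 < s < 1 -> 0 < delta < 1 ->
    Omega != fset0 ->
    furstenberg_tuple delta alpha K Omega nu' ->
    (forall (x : R * R) (r : R), delta <= r <= 1 ->
       (#|` fset_ball Omega x r |%:R <= A * r `^ beta * #|` Omega |%:R)) ->
    (covN (\bigcup_(w in [set` Omega]) msupp (nu_of nu' w)) (delta `^ s)
       <= ((delta `^ s) `^ (- alpha - beta / 2 - eta))%:E)%E ->
    maximal_separated (delta `^ s) Lambda Omega ->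
    exists Lambda' : {fset (R * R)},
      (Lambda' `<=` Lambda)%fset /\
      c * (delta `^ s) `^ (- beta) <= #|` Lambda' |%:R /\
      forall lam, lam \in Lambda' ->
        c * (delta `^ s) `^ (beta + 2 * eta) * #|` Omega |%:R
          <= #|` fset_ball Omega lam (delta `^ s) |%:R.
Proof.
move=> a0 b0 K1 A1.
have [d0 d0_gt0 [d0_le frostman_d0]] := frostman_scale a0 K1.
have C0 := net_constant_ge0 K d0.
exists (2 * (net_constant K d0 + A))^-1; split; first by rewrite invr_gt0; lra.
move=> eta s delta Om nu' La e0 s01 de01 Om0 Hf frost Hcov Hmax.
have [r0 hr] := power_scale s01 de01.
have cardLa := net_card_bound a0 b0 e0 K1 r0 hr d0_gt0 d0_le frostman_d0 Hf Hcov Hmax.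
exact: rich_net_selection r0 A1 C0 Om0 (maximal_separated_net r0 Hmax)
  (fun l _ => frost l _ hr) cardLa.
Qed.
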